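(* The cardinality $|\mathcal{D}|$ of the collection of drawable sets is strictly less than the cardinality of the collection of convex subsets of $\mathbb{R}^2$. In particular, not every convex subset of $\mathbb{R}^2$ is drawable (indeed most are not).
   Context: For $A\subseteq\mathbb{R}^2$ let $N(A)=\{x\in\mathbb{R}^2: |x-a|<1 \text{ for some } a\in A\}$. Let $\mathcal{D}_1=\{N(A_1): A_1\subseteq\mathbb{R}^2\}$ and for $n\ge 2$ let $\mathcal{D}_n=\{D\cup N(A_n): D\in\mathcal{D}_{n-1}, A_n\subseteq\mathbb{R}^2\}$ if $n$ is odd and $\mathcal{D}_n=\{D\setminus N(A_n): D\in\mathcal{D}_{n-1}, A_n\subseteq\mathbb{R}^2\}$ if $n$ is even. A set is drawable if it lies in $\mathcal{D}=\bigcup_{n\ge1}\mathcal{D}_n$. *)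

From Stdlib Require Import Reals.
Open Scope R_scope.

Definition point := (R * R)%type.
Definition pset := point -> Prop.

Definition dist2 (x y : point) : R :=
  sqrt ((fst x - fst y) ^ 2 + (snd x - snd y) ^ 2).

Definition Nbhd (A : pset) : pset :=
  fun x => exists a, A a /\ dist2 x a < 1.

(* Dlev k = D_(k+1).  D_1 = { N(A_1) };
   D_n = { D u N(A_n) } for n odd, { D \ N(A_n) } for n even (n >= 2). *)
Fixpoint Dlev (k : nat) : pset -> Prop :=
  match k with
  | O => fun S => exists A1 : pset, S = Nbhd A1
  | S k' => fun S =>
      exists (D : pset) (A : pset), Dlev k' D /\
        (* n = k' + 2 ; n odd iff k' odd *)
        S = (if Nat.odd k' then (fun x => D x \/ Nbhd A x)
                           else (fun x => D x /\ ~ Nbhd A x))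
  end.

Definition drawable (S : pset) : Prop := exists k, Dlev k S.

Definition convex (C : pset) : Prop :=
  forall x y : point, forall t : R, C x -> C y -> 0 <= t <= 1 ->
    C (t * fst x + (1 - t) * fst y, t * snd x + (1 - t) * snd y).

Definition injective {A B : Type} (f : A -> B) : Prop :=
  forall a1 a2, f a1 = f a2 -> a1 = a2.

Definition card_lt (A B : Type) : Prop :=
  (exists f : A -> B, injective f) /\ ~ (exists g : B -> A, injective g).

(* Each N(A_i) is open, hence the union of the dyadic
   boxes it contains, so a drawable set is determined by its level and a
   countable family of bits: there are at most continuum many of them, via an
   injective ternary expansion of sets of naturals.  Conversely, for any
   P ⊆ ℝ the open region above the parabola y = x², together with the points
   (x, x²) with x ∈ P, is convex, and P can be read back off it; so there are
   at least 2^continuum convex sets, and Cantor's theorem separates the two. *)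
From Stdlib Require Import Reals Lra Lia ZArith Cantor Rgeom Wf_nat Classical
  ClassicalEpsilon FunctionalExtensionality PropExtensionality ProofIrrelevance.
Open Scope R_scope.

Definition card_le (A B : Type) : Prop := exists f : A -> B, injective f.

Lemma card_le_refl (A : Type) : card_le A A.
Proof. exists (fun a => a). intros a1 a2 E. exact E. Qed.

Lemma card_le_trans (A B C : Type) : card_le A B -> card_le B C -> card_le A C.
Proof.
  intros [f Hf] [g Hg]. exists (fun a => g (f a)).
  intros a1 a2 E. apply Hf, Hg, E.
Qed.

Lemma card_le_sig_incl (A : Type) (P Q : A -> Prop) :
  (forall a, P a -> Q a) -> card_le {a | P a} {a | Q a}.
Proof.
  intros PQ. exists (fun x => exist Q (proj1_sig x) (PQ _ (proj2_sig x))).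
  intros [a1 H1] [a2 H2] E. apply (f_equal (@proj1_sig _ _)) in E.
  apply subset_eq_compat, E.
Qed.

Lemma card_le_sig_cover (A K : Type) (P : A -> Prop) (decode : K -> A) :
  (forall a, P a -> exists k, decode k = a) -> card_le {a | P a} K.
Proof.
  intros cover.
  exists (fun x => proj1_sig (constructive_indefinite_description _
                               (cover _ (proj2_sig x)))).
  intros [a1 H1] [a2 H2]; simpl.
  destruct constructive_indefinite_description as [k1 <-].
  destruct constructive_indefinite_description as [k2 <-]; simpl.
  intros ->. apply subset_eq_compat. reflexivity.
Qed.

Lemma card_le_singleton (A : Type) : card_le A (A -> Prop).
Proof.
  exists (fun a b => b = a). intros a1 a2 E.
  rewrite <- (equal_f E a1). reflexivity.
Qed.

Lemma card_le_powerset (A B : Type) : card_le A B -> card_le (A -> Prop) (B -> Prop).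
Proof.
  intros [f Hf]. exists (fun P b => exists a, f a = b /\ P a).
  intros P Q E. extensionality a. apply propositional_extensionality.
  pose proof (equal_f E (f a)) as Ea.
  split; intros Ha.
  - assert (HQ : exists a', f a' = f a /\ Q a') by (rewrite <- Ea; eauto).
    destruct HQ as [a' [e Qa']]. apply Hf in e. subst. exact Qa'.
  - assert (HP : exists a', f a' = f a /\ P a') by (rewrite Ea; eauto).
    destruct HP as [a' [e Pa']]. apply Hf in e. subst. exact Pa'.
Qed.

Lemma powerset_not_card_le (A : Type) : ~ card_le (A -> Prop) A.
Proof.
  intros [h Hh]. set (P := fun a => exists Q, h Q = a /\ ~ Q a).
  destruct (classic (P (h P))) as [HP|HP].
  - pose proof HP as [Q [e NQ]]. apply Hh in e. subst Q. contradiction.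
  - apply HP. exists P. split; [reflexivity | exact HP].
Qed.

Lemma card_le_prod_powerset (A I : Type) : card_le (A * (I -> Prop)) (A + I -> Prop).
Proof.
  exists (fun c t => match t with inl a => a = fst c | inr i => snd c i end).
  intros [a1 P1] [a2 P2] E; simpl in E.
  pose proof (equal_f E (inl a1)) as Ea; simpl in Ea.
  assert (a1 = a2) as <- by (rewrite <- Ea; reflexivity).
  f_equal. extensionality i. exact (equal_f E (inr i)).
Qed.

Lemma card_le_Z_nat : card_le Z nat.
Proof.
  exists (fun z => Z.to_nat (if Z.leb 0 z then 2 * z else -2 * z - 1)%Z).
  intros z1 z2. destruct (Z.leb_spec 0 z1), (Z.leb_spec 0 z2); lia.
Qed.

Lemma card_le_prod_nat (A B : Type) :
  card_le A nat -> card_le B nat -> card_le (A * B) nat.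
Proof.
  intros [f Hf] [g Hg]. exists (fun p => to_nat (f (fst p), g (snd p))).
  intros [a1 b1] [a2 b2] E.
  apply (f_equal of_nat) in E. rewrite !cancel_of_to in E.
  injection E as Ea Eb. apply Hf in Ea. apply Hg in Eb. subst. reflexivity.
Qed.

Lemma card_le_sum_nat (A B : Type) :
  card_le A nat -> card_le B nat -> card_le (A + B) nat.
Proof.
  intros [f Hf] [g Hg].
  exists (fun t => match t with inl a => 2 * f a | inr b => S (2 * g b) end)%nat.
  intros [a1|b1] [a2|b2] E; try lia.
  - f_equal. apply Hf. lia.
  - f_equal. apply Hg. lia.
Qed.

Definition digit (s : nat -> Prop) (k : nat) : R :=
  if excluded_middle_informative (s k) then (/3) ^ S k else 0.

Fixpoint ternary_sum (s : nat -> Prop) (n : nat) : R :=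
  match n with O => 0 | S n' => ternary_sum s n' + digit s n' end.

Lemma digit_bounds (s : nat -> Prop) (k : nat) : 0 <= digit s k <= (/3) ^ S k.
Proof.
  assert (0 < (/3) ^ S k) by (apply pow_lt; lra).
  unfold digit; destruct excluded_middle_informative; lra.
Qed.

Lemma ternary_sum_le_add (s : nat -> Prop) (m l : nat) :
  ternary_sum s m <= ternary_sum s (m + l).
Proof.
  induction l as [|l IH].
  - rewrite Nat.add_0_r; lra.
  - rewrite Nat.add_succ_r; simpl. pose proof (digit_bounds s (m + l)); lra.
Qed.

Lemma ternary_sum_tail (s : nat -> Prop) (m l : nat) :
  ternary_sum s (m + l) <= ternary_sum s m + (/3) ^ m / 2 * (1 - (/3) ^ l).
Proof.
  induction l as [|l IH].
  - rewrite Nat.add_0_r; simpl; lra.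
  - rewrite Nat.add_succ_r; simpl.
    pose proof (digit_bounds s (m + l)) as [_ H].
    rewrite <- Nat.add_succ_r, pow_add in H. simpl in H |- *.
    assert (0 < (/3) ^ m) by (apply pow_lt; lra).
    assert (0 < (/3) ^ l) by (apply pow_lt; lra).
    nra.
Qed.

Lemma ternary_sum_le (s : nat -> Prop) (m n : nat) :
  ternary_sum s n <= ternary_sum s m + (/3) ^ m / 2.
Proof.
  destruct (Nat.le_ge_cases n m) as [Hnm|Hmn].
  - pose proof (ternary_sum_le_add s n (m - n)) as H.
    replace (n + (m - n))%nat with m in H by lia.
    assert (0 < (/3) ^ m) by (apply pow_lt; lra). lra.
  - pose proof (ternary_sum_tail s m (n - m)) as H.
    replace (m + (n - m))%nat with n in H by lia.
    assert (0 < (/3) ^ m) by (apply pow_lt; lra).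
    assert (0 < (/3) ^ (n - m)) by (apply pow_lt; lra). nra.
Qed.

Lemma ternary_sum_bounded (s : nat -> Prop) :
  bound (fun x => exists n, x = ternary_sum s n).
Proof.
  exists (/2). intros x [n ->]. pose proof (ternary_sum_le s 0 n). simpl in *. lra.
Qed.

Lemma ternary_sum_inhabited (s : nat -> Prop) :
  exists x, exists n, x = ternary_sum s n.
Proof. exists 0, O. reflexivity. Qed.

Definition ternary (s : nat -> Prop) : R :=
  proj1_sig (completeness _ (ternary_sum_bounded s) (ternary_sum_inhabited s)).

Lemma ternary_lub (s : nat -> Prop) :
  is_lub (fun x => exists n, x = ternary_sum s n) (ternary s).
Proof. unfold ternary. destruct completeness; assumption. Qed.

Lemma ternary_sum_agree (s t : nat -> Prop) (m : nat) :
  (forall k, (k < m)%nat -> (s k <-> t k)) -> ternary_sum s m = ternary_sum t m.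
Proof.
  induction m as [|m IH]; intros Hst; simpl; [reflexivity|].
  rewrite IH by (intros k Hk; apply Hst; lia).
  f_equal. unfold digit.
  specialize (Hst m (Nat.lt_succ_diag_r m)).
  do 2 destruct excluded_middle_informative; tauto.
Qed.

(* At the first index where they differ, [s] gains [3^-(m+1)] while all later
   digits of [t] contribute at most half of that. *)
Lemma ternary_lt (s t : nat -> Prop) (m : nat) :
  (forall k, (k < m)%nat -> (s k <-> t k)) -> s m -> ~ t m -> ternary t < ternary s.
Proof.
  intros Hst Hs Ht.
  assert (Es : ternary_sum s (S m) = ternary_sum s m + (/3) ^ S m).
  { simpl. unfold digit. destruct excluded_middle_informative; tauto. }
  assert (Et : ternary_sum t (S m) = ternary_sum s m).
  { simpl. rewrite (ternary_sum_agree s t m Hst). unfold digit.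
    destruct excluded_middle_informative; [tauto | lra]. }
  assert (Hs_ge : ternary_sum s (S m) <= ternary s)
    by (apply (ternary_lub s); eauto).
  assert (Ht_le : ternary t <= ternary_sum s m + (/3) ^ S m / 2).
  { apply (ternary_lub t). intros x [n ->].
    rewrite <- Et. apply ternary_sum_le. }
  assert (0 < (/3) ^ S m) by (apply pow_lt; lra).
  lra.
Qed.

Lemma first_difference (s t : nat -> Prop) :
  s <> t -> exists m, (forall k, (k < m)%nat -> (s k <-> t k)) /\ ~ (s m <-> t m).
Proof.
  intros Hne.
  assert (Hex : exists k, ~ (s k <-> t k)).
  { apply NNPP; intros N. apply Hne. extensionality k.
    apply propositional_extensionality. apply NNPP; eauto. }
  destruct (dec_inh_nat_subset_has_unique_least_element _ (fun k => classic _) Hex)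
    as [m [[Hm Hleast] _]].
  exists m. split; [|exact Hm].
  intros k Hk. apply NNPP; intros Hk'. specialize (Hleast k Hk'). lia.
Qed.

Lemma ternary_inj : injective ternary.
Proof.
  intros s t E. apply NNPP; intros Hne.
  destruct (first_difference s t Hne) as [m [Hst Hm]].
  destruct (classic (s m)) as [Sm|Sm].
  - pose proof (ternary_lt s t m Hst Sm ltac:(tauto)). lra.
  - assert (Hts : forall k, (k < m)%nat -> (t k <-> s k))
      by (intros k Hk; specialize (Hst k Hk); tauto).
    pose proof (ternary_lt t s m Hts ltac:(tauto) Sm). lra.
Qed.

Lemma card_le_powerset_nat_R : card_le (nat -> Prop) R.
Proof. exists ternary. exact ternary_inj. Qed.

Definition box_index := (Z * Z * nat)%type.

Definition box (q : box_index) : pset :=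
  fun y => let '(a, b, n) := q in
    Rabs (fst y - IZR a * (/2) ^ n) < (/2) ^ n /\
    Rabs (snd y - IZR b * (/2) ^ n) < (/2) ^ n.

Definition box_open (U : pset) : Prop :=
  forall x, U x -> exists q, box q x /\ forall y, box q y -> U y.

Definition box_code (U : pset) : box_index -> Prop :=
  fun q => forall y, box q y -> U y.

Definition box_union (c : box_index -> Prop) : pset :=
  fun y => exists q, c q /\ box q y.

Lemma box_union_code (U : pset) : box_open U -> box_union (box_code U) = U.
Proof.
  intros HU. extensionality y. apply propositional_extensionality. split.
  - intros [q [Hq Hy]]. exact (Hq y Hy).
  - intros Hy. destruct (HU y Hy) as [q [Hq HqU]]. exists q. auto.
Qed.

Lemma grid_approx (x r : R) : 0 < r -> exists a : Z, Rabs (x - IZR a * r) < r.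
Proof.
  intros Hr. destruct (archimed (x / r)) as [H1 H2].
  exists (up (x / r) - 1)%Z. rewrite minus_IZR.
  assert (Hx : x = x / r * r) by (field; lra).
  set (u := IZR (up (x / r))) in *. set (v := x / r) in *.
  apply Rabs_def1; nra.
Qed.

Lemma small_box (x : point) (d : R) :
  0 < d -> exists q, box q x /\ forall y, box q y -> dist2 y x < d.
Proof.
  intros Hd.
  destruct (pow_lt_1_zero (/2) ltac:(rewrite Rabs_right; lra) (d / 3) ltac:(lra))
    as [N HN].
  specialize (HN N (le_n N)). rewrite Rabs_right in HN by (left; apply pow_lt; lra).
  set (r := (/2) ^ N) in HN.
  assert (Hr : 0 < r) by (apply pow_lt; lra).
  destruct (grid_approx (fst x) r Hr) as [a Ha].
  destruct (grid_approx (snd x) r Hr) as [b Hb].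
  exists (a, b, N). split; [split; assumption|].
  intros y [Hya Hyb]. fold r in Hya, Hyb.
  apply Rabs_def2 in Ha, Hb, Hya, Hyb.
  unfold dist2. rewrite <- (sqrt_square d) by lra.
  pose proof (pow2_ge_0 (fst y - fst x)). pose proof (pow2_ge_0 (snd y - snd x)).
  apply sqrt_lt_1; [lra | nra |].
  (* each coordinate differs by less than [2 r], and [8 r^2 < 9 r^2 < d^2] *)
  simpl. nra.
Qed.

Lemma dist2_euc (x y : point) : dist2 x y = dist_euc (fst x) (snd x) (fst y) (snd y).
Proof. unfold dist2, dist_euc. rewrite !Rsqr_pow2. reflexivity. Qed.

Lemma Nbhd_box_open (A : pset) : box_open (Nbhd A).
Proof.
  intros x [a [Ha Hxa]].
  destruct (small_box x (1 - dist2 x a) ltac:(lra)) as [q [Hq Hsmall]].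
  exists q. split; [exact Hq|].
  intros y Hy. exists a. split; [exact Ha|].
  pose proof (Hsmall y Hy). rewrite !dist2_euc in *.
  pose proof (triangle (fst y) (snd y) (fst a) (snd a) (fst x) (snd x)). lra.
Qed.

(* [U 0] is the set added or removed last, [U k] the first one. *)
Fixpoint build (k : nat) (U : nat -> pset) : pset :=
  match k with
  | O => U O
  | S k' =>
      let D := build k' (fun i => U (S i)) in
      if Nat.odd k' then fun x => D x \/ U O x else fun x => D x /\ ~ U O x
  end.

Lemma Dlev_build (k : nat) (S : pset) :
  Dlev k S -> exists A : nat -> pset, S = build k (fun i => Nbhd (A i)).
Proof.
  revert S. induction k as [|k IH]; intros S HS.
  - destruct HS as [A ->]. exists (fun _ => A). reflexivity.
  - destruct HS as [D [A [HD ->]]]. destruct (IH D HD) as [As ->].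
    exists (fun i => match i with O => A | S i => As i end). reflexivity.
Qed.

Definition decode (c : nat * (nat * box_index -> Prop)) : pset :=
  build (fst c) (fun i => box_union (fun q => snd c (i, q))).

Lemma drawable_decode (S : pset) : drawable S -> exists c, decode c = S.
Proof.
  intros [k HS]. destruct (Dlev_build k S HS) as [A ->].
  exists (k, fun iq => box_code (Nbhd (A (fst iq))) (snd iq)).
  unfold decode; simpl. f_equal. extensionality i.
  apply box_union_code, Nbhd_box_open.
Qed.

Lemma card_le_drawable_R : card_le {S | drawable S} R.
Proof.
  assert (Hcount : card_le (nat + nat * box_index) nat).
  { unfold box_index. pose proof (card_le_refl nat). pose proof card_le_Z_nat.
    auto using card_le_sum_nat, card_le_prod_nat. }
  apply (card_le_trans _ _ _ (card_le_sig_cover _ _ _ decode drawable_decode)).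
  apply (card_le_trans _ _ _ (card_le_prod_powerset _ _)).
  apply (card_le_trans _ _ _ (card_le_powerset _ _ Hcount)).
  exact card_le_powerset_nat_R.
Qed.

Definition parabola_hull (P : R -> Prop) : pset :=
  fun p => fst p ^ 2 < snd p \/ (snd p = fst p ^ 2 /\ P (fst p)).

Lemma parabola_chord (a b c d t : R) :
  a ^ 2 <= b -> c ^ 2 <= d -> 0 <= t <= 1 ->
  t * b + (1 - t) * d <= (t * a + (1 - t) * c) ^ 2 ->
  t = 0 \/ t = 1 \/ (a = c /\ b = d).
Proof.
  intros Hb Hd Ht Hgap.
  destruct (Req_dec t 0) as [->|H0]; [now left|].
  destruct (Req_dec t 1) as [->|H1]; [now right; left|].
  right; right.
  assert (Hid : t * b + (1 - t) * d - (t * a + (1 - t) * c) ^ 2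
                = t * (b - a ^ 2) + (1 - t) * (d - c ^ 2) + t * (1 - t) * ((a - c) * (a - c)))
    by ring.
  assert (Ht' : 0 < t < 1) by lra.
  assert (0 <= t * (b - a ^ 2)) by nra.
  assert (0 <= (1 - t) * (d - c ^ 2)) by nra.
  assert (Htt : 0 < t * (1 - t)) by nra.
  assert (0 <= t * (1 - t) * ((a - c) * (a - c)))
    by (apply Rmult_le_pos; [lra | apply Rle_0_sqr]).
  assert (Hac : (a - c) * (a - c) = 0).
  { apply (Rmult_eq_reg_l (t * (1 - t))); lra. }
  assert (a = c) by nra. subst c.
  simpl in *. nra.
Qed.

Lemma parabola_hull_convex (P : R -> Prop) : convex (parabola_hull P).
Proof.
  intros [a b] [c d] t Hp Hq Ht. unfold parabola_hull in *; simpl in *.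
  destruct (Rlt_or_le ((t * a + (1 - t) * c) ^ 2) (t * b + (1 - t) * d)) as [Hlt|Hle].
  - left. exact Hlt.
  - assert (Hb : a ^ 2 <= b) by (destruct Hp as [H|[H _]]; lra).
    assert (Hd : c ^ 2 <= d) by (destruct Hq as [H|[H _]]; lra).
    destruct (parabola_chord a b c d t Hb Hd Ht Hle) as [->|[->|[<- <-]]].
    + replace (0 * a + (1 - 0) * c) with c by ring.
      replace (0 * b + (1 - 0) * d) with d by ring. exact Hq.
    + replace (1 * a + (1 - 1) * c) with a by ring.
      replace (1 * b + (1 - 1) * d) with b by ring. exact Hp.
    + replace (t * a + (1 - t) * a) with a by ring.
      replace (t * b + (1 - t) * b) with b by ring. exact Hp.
Qed.

Lemma parabola_hull_inj : injective parabola_hull.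
Proof.
  intros P Q E. extensionality r. apply propositional_extensionality.
  pose proof (equal_f E (r, r ^ 2)) as Er. unfold parabola_hull in Er; cbn [fst snd] in Er.
  assert (Hr : ~ r ^ 2 < r ^ 2) by lra.
  split; intros H.
  - assert (HQ : r ^ 2 < r ^ 2 \/ r ^ 2 = r ^ 2 /\ Q r) by (rewrite <- Er; auto).
    tauto.
  - assert (HP : r ^ 2 < r ^ 2 \/ r ^ 2 = r ^ 2 /\ P r) by (rewrite Er; auto).
    tauto.
Qed.

Lemma card_le_powerset_R_convex : card_le (R -> Prop) {C | convex C}.
Proof.
  exists (fun P => exist convex (parabola_hull P) (parabola_hull_convex P)).
  intros P Q E. apply (f_equal (@proj1_sig _ _)) in E. exact (parabola_hull_inj P Q E).
Qed.

Theorem corollary2p3 :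
  card_lt {S : pset | drawable S} {C : pset | convex C} /\
  (exists C : pset, convex C /\ ~ drawable C).
Proof.
  assert (convex_not_le_drawable : ~ card_le {C | convex C} {S | drawable S}).
  { intros CD. apply (powerset_not_card_le R).
    apply (card_le_trans _ _ _ card_le_powerset_R_convex).
    apply (card_le_trans _ _ _ CD), card_le_drawable_R. }
  split; [split|].
  - apply (card_le_trans _ _ _ card_le_drawable_R).
    apply (card_le_trans _ _ _ (card_le_singleton R)), card_le_powerset_R_convex.
  - exact convex_not_le_drawable.
  - apply NNPP; intros Hall. apply convex_not_le_drawable, card_le_sig_incl.
    intros C HC. apply NNPP; eauto.
Qed.
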